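(* For every integer $n\ge 1$: $\overline{\mathrm{spt}}(n)$ is odd if and only if $n$ is a square or twice a square; $\overline{\mathrm{spt}}_1(n)$ is odd if and only if $n$ is an odd square; $\overline{\mathrm{spt}}_2(n)$ is odd if and only if $n$ is an even square or twice a square.
   Context: An overpartition of $n$ is a partition of $n$ in which the first occurrence of each part size may (optionally) be overlined. $\overline{\mathrm{spt}}(n)$ is the total number of smallest parts, summed over all overpartitions of $n$ whose smallest part is not overlined (overpartitions whose smallest part is overlined contribute nothing). $\overline{\mathrm{spt}}_1(n)$ is the same count restricted to those overpartitions whose smallest part is odd, and $\overline{\mathrm{spt}}_2(n)$ is the same count restricted to those whose smallest part is even. For example $\overline{\mathrm{spt}}(4)=13$, $\overline{\mathrm{spt}}_1(4)=10$, $\overline{\mathrm{spt}}_2(4)=3$. *)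

From mathcomp Require Import all_boot.
Set Implicit Arguments. Unset Strict Implicit. Unset Printing Implicit Defensive.

(* An overpartition of n is encoded (bijectively) by
   - m : {ffun 'I_n -> 'I_n.+1}, where m i is the multiplicity of the part
     size i.+1 (any multiplicity is <= n, so 'I_n.+1 suffices), and
   - o : {ffun 'I_n -> bool}, where o i says that (the first occurrence of)
     the part size i.+1 is overlined; overlining is only possible for part
     sizes that actually occur. *)
Definition is_overpartition (n : nat) (m : {ffun 'I_n -> 'I_n.+1})
    (o : {ffun 'I_n -> bool}) : bool :=
  (\sum_(i < n) i.+1 * m i == n) && [forall i, o i ==> (0 < m i)].

Definition is_smallest_part (n : nat) (m : {ffun 'I_n -> 'I_n.+1}) (i : 'I_n) : bool :=
  (0 < m i) && [forall j : 'I_n, (0 < m j) ==> (i <= j)].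

Definition sptbar_P (P : pred nat) (n : nat) : nat :=
  \sum_(m : {ffun 'I_n -> 'I_n.+1}) \sum_(o : {ffun 'I_n -> bool})
    \sum_(i < n | [&& is_overpartition m o, is_smallest_part m i, ~~ o i & P i.+1])
      (m i : nat).

Definition sptbar (n : nat) : nat := sptbar_P predT n.
Definition sptbar1 (n : nat) : nat := sptbar_P odd n.
Definition sptbar2 (n : nat) : nat := sptbar_P (fun k => ~~ odd k) n.

From mathcomp Require Import all_boot.
From mathcomp Require Import zify.
Set Implicit Arguments. Unset Strict Implicit. Unset Printing Implicit Defensive.

(* Toggling the overline of a part size other than the smallest one is an
   involution on the overpartitions that are counted, and it preserves the
   number of smallest parts; it has no fixed points as soon as a second part
   size occurs.  Hence modulo 2 only the partitions d + d + ... + d of n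
   survive, each contributing n/d, and sptbar_P(n) = #{d | n : P d, n/d odd}
   (mod 2).
   For P = odd this count is the number of divisors of n when n is odd and 0
   otherwise, and pairing d with n/d shows that the number of divisors is odd
   exactly for squares.  Writing d = 2e, the count for P = even at 2m equals
   the total count at m; consequently the total count is the same at 2m and at
   m, which gives the remaining two statements by halving. *)

Lemma eq_odd_sum (I : Type) (r : seq I) (P : pred I) (F G : I -> nat) :
  (forall i, P i -> odd (F i) = odd (G i)) ->
  odd (\sum_(i <- r | P i) F i) = odd (\sum_(i <- r | P i) G i).
Proof.
move=> eFG; apply: (big_rec2 (fun a b => odd a = odd b)) => // i a b Pi e.
by rewrite !oddD eFG // e.
Qed.

Lemma odd_sum_count (I : Type) (r : seq I) (P : pred I) (F : I -> nat) :
  odd (\sum_(i <- r | P i) F i) = odd (count (fun i => P i && odd (F i)) r).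
Proof.
elim: r => [|x r IH]; first by rewrite big_nil.
by rewrite big_cons /=; case: (P x) => //=; rewrite oddD IH; case: (odd (F x)).
Qed.

Lemma odd_sum_involution (T : finType) (P : pred T) (F : T -> nat) (f : T -> T) :
  involutive f -> (forall x, P (f x) = P x) -> (forall x, F (f x) = F x) ->
  odd (\sum_(x | P x) F x) = odd (\sum_(x | P x && (f x == x)) F x).
Proof.
move=> fK Pf Ff.
rewrite (bigID (fun x => f x == x)) /= oddD.
(* The non-fixed points come in pairs {x, f x}; enum_rank picks one of each. *)
rewrite [X in _ (+) odd X](bigID (fun x => enum_rank x < enum_rank (f x))) /=.
set A := \sum_(i | _ && (_ < _)) _.
have -> : \sum_(x | P x && (f x != x) && ~~ (enum_rank x < enum_rank (f x))) F x = A.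
  rewrite /A (reindex_inj (inv_inj fK)) /=.
  apply: eq_big => [x|x _]; last exact: Ff.
  rewrite fK Pf eq_sym; case: (P x) => //=; case: (f x =P x) => //= ne.
  rewrite -leqNgt leq_eqVlt; case: eqP => //= e.
  by case: ne; apply: enum_rank_inj; apply: val_inj.
by rewrite addnn odd_double addbF.
Qed.

Definition toggle_at n (j0 : 'I_n) (o : {ffun 'I_n -> bool}) : {ffun 'I_n -> bool} :=
  [ffun j => if j == j0 then ~~ o j else o j].

Lemma toggle_atK n (j0 : 'I_n) : involutive (toggle_at j0).
Proof. by move=> o; apply/ffunP => j; rewrite !ffunE; case: eqP; rewrite ?negbK. Qed.

Definition sptbar_of n (m : {ffun 'I_n -> 'I_n.+1}) (i : 'I_n) : nat :=
  \sum_(o : {ffun 'I_n -> bool})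
    (if [&& is_overpartition m o, is_smallest_part m i & ~~ o i] then (m i : nat) else 0).

Definition sptbar_at n (i : 'I_n) : nat := \sum_(m : {ffun 'I_n -> 'I_n.+1}) sptbar_of m i.

Lemma sptbar_P_sum (P : pred nat) n :
  sptbar_P P n = \sum_(i < n | P i.+1) sptbar_at i.
Proof.
rewrite /sptbar_P /sptbar_at /sptbar_of.
under eq_bigr => m _ do under eq_bigr => o _ do rewrite big_mkcond.
under eq_bigr => m _ do rewrite exchange_big.
rewrite exchange_big [RHS]big_mkcond; apply: eq_bigr => i _.
case: (P i.+1).
  by apply: eq_bigr => m _; apply: eq_bigr => o _; rewrite andbT.
by rewrite big1 // => m _; rewrite big1 // => o _; rewrite !andbF.
Qed.

Definition rectangular n (m : {ffun 'I_n -> 'I_n.+1}) (i : 'I_n) : bool :=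
  (i.+1 * m i == n) && [forall j, (j != i) ==> (m j == 0 :> nat)].

Lemma sum_parts_single n (m : {ffun 'I_n -> 'I_n.+1}) (i : 'I_n) :
  (forall j, j != i -> m j = 0 :> nat) -> \sum_(j < n) j.+1 * m j = i.+1 * m i.
Proof.
by move=> m0; rewrite (bigD1 i) //= big1 ?addn0 // => j /m0 ->; rewrite muln0.
Qed.

Lemma odd_overlinings_other_part n (m : {ffun 'I_n -> 'I_n.+1}) (i j0 : 'I_n) :
  j0 != i -> 0 < m j0 ->
  ~~ odd (sptbar_of m i).
Proof.
move=> j0i mj0; rewrite /sptbar_of -big_mkcond (odd_sum_involution (toggle_atK j0)) //=.
- rewrite big_pred0 // => o; apply/negP => /andP[_ /eqP/ffunP/(_ j0)].
  by rewrite ffunE eqxx; case: (o j0).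
- move=> o; rewrite /is_overpartition ffunE [i == j0]eq_sym (negbTE j0i).
  congr [&& _ && _, _ & _]; apply/forallP/forallP => h j; have := h j;
    rewrite !ffunE; case: (j =P j0) => [->|//]; by rewrite mj0 !implybT.
Qed.

Lemma sum_overlinings_single_part n (m : {ffun 'I_n -> 'I_n.+1}) (i : 'I_n) :
  (forall j, j != i -> m j = 0 :> nat) ->
  sptbar_of m i
  = if rectangular m i then (m i : nat) else 0.
Proof.
move=> m0; rewrite /sptbar_of.
have -> : rectangular m i = (i.+1 * m i == n).
  by rewrite /rectangular andb_idr // => _; apply/forallP => j; apply/implyP => /m0 ->.
have -> : is_smallest_part m i = (0 < m i).
  apply: andb_idr => _; apply/forallP => j; apply/implyP.
  by case: (j =P i) => [-> //|/eqP /m0 ->].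
rewrite -big_mkcond /is_overpartition (sum_parts_single m0).
case: (boolP (i.+1 * m i == n)) => [/eqP e|ne]; last first.
  by rewrite big_pred0 // => o; rewrite (negbTE ne).
have mi0 : 0 < m i by have := ltn_ord i; nia.
rewrite (big_pred1 [ffun=> false]) // => o /=; rewrite mi0 /=.
apply/andP/eqP => [[/forallP h oi]|->]; last first.
  by rewrite ffunE; split => //; apply/forallP => j; rewrite ffunE.
apply/ffunP => j; rewrite ffunE; case: (j =P i) => [-> |/eqP ji]; first exact: negbTE.
by have := h j; rewrite m0 //; case: (o j).
Qed.

Lemma odd_sum_overlinings n (m : {ffun 'I_n -> 'I_n.+1}) (i : 'I_n) :
  odd (sptbar_of m i)
  = odd (if rectangular m i then (m i : nat) else 0).
Proof.
case: (pickP (fun j => (j != i) && (0 < m j))) => [j0 /andP[j0i mj0] | none].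
  rewrite (negbTE (odd_overlinings_other_part j0i mj0)).
  suff -> : rectangular m i = false by [].
  apply/negP => /andP[_ /forallP/(_ j0)]; rewrite j0i => /eqP mj.
  by rewrite mj in mj0.
rewrite sum_overlinings_single_part // => j ji.
by apply/eqP; move: (none j); rewrite ji /= lt0n => /negbFE.
Qed.

Lemma sum_rectangular n (i : 'I_n) :
  \sum_(m : {ffun 'I_n -> 'I_n.+1} | rectangular m i) (m i : nat)
  = if i.+1 %| n then n %/ i.+1 else 0.
Proof.
case: ifP => [dvd_in|not_dvd]; last first.
  rewrite big_pred0 // => m; apply/negP => /andP[/eqP e _].
  by move: not_dvd; rewrite -[X in _ %| X]e dvdn_mulr.
have lt_quot : n %/ i.+1 < n.+1 by rewrite ltnS leq_div.
pose m0 : {ffun 'I_n -> 'I_n.+1} :=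
  [ffun j => if j == i then inord (n %/ i.+1) else ord0].
have m0i : m0 i = n %/ i.+1 :> nat by rewrite ffunE eqxx inordK.
rewrite (big_pred1 m0) // => m /=.
apply/idP/eqP => [/andP[/eqP e /forallP m0j]|->].
  apply/ffunP => j; apply: val_inj; rewrite ffunE; case: (j =P i) => [->|/eqP ji].
    by rewrite /= inordK // -[X in X %/ _]e mulKn.
  by have := m0j j; rewrite ji => /eqP.
rewrite /rectangular m0i mulnC divnK // eqxx; apply/forallP => j.
by apply/implyP => ji; rewrite ffunE (negbTE ji).
Qed.

Lemma odd_sptbar_at n (i : 'I_n) :
  odd (sptbar_at i) = (i.+1 %| n) && odd (n %/ i.+1).
Proof.
rewrite /sptbar_at (eq_odd_sum _ (fun m _ => odd_sum_overlinings m i)).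
by rewrite -big_mkcond sum_rectangular; case: ifP.
Qed.

Definition odd_codivisor_count (P : pred nat) n :=
  count (fun d => [&& d %| n, P d & odd (n %/ d)]) (iota 1 n).

Lemma count_ord_succ n (a : pred nat) :
  count (fun i : 'I_n => a i.+1) (index_enum 'I_n) = count a (iota 1 n).
Proof.
rewrite /index_enum unlock -enumT.
by rewrite (iotaDl 1 0) -val_enum_ord -map_comp count_map.
Qed.

Lemma odd_sptbar_P (P : pred nat) n :
  odd (sptbar_P P n) = odd (odd_codivisor_count P n).
Proof.
rewrite sptbar_P_sum odd_sum_count /odd_codivisor_count -count_ord_succ.
by congr odd; apply: eq_count => i; rewrite odd_sptbar_at andbCA.
Qed.

Section Codivisor.

Variable N : nat.
Hypothesis N_gt0 : 0 < N.

Definition codivisor (d : 'I_N.+1) : 'I_N.+1 :=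
  if d %| N then inord (N %/ d) else d.

Lemma val_codivisor (d : 'I_N.+1) : d %| N -> codivisor d = N %/ d :> nat.
Proof. by move=> dvd_dN; rewrite /codivisor dvd_dN inordK // ltnS leq_div. Qed.

Lemma codivisor_id (d : 'I_N.+1) : ~~ (d %| N) -> codivisor d = d.
Proof. by rewrite /codivisor => /negbTE ->. Qed.

Lemma dvdn_codivisor (d : 'I_N.+1) : (codivisor d %| N) = (d %| N).
Proof.
case: (boolP (d %| N)) => [dvd_dN|/negbTE not_dvd]; last by rewrite codivisor_id ?not_dvd.
by rewrite val_codivisor // dvdn_div.
Qed.

Lemma codivisorK : involutive codivisor.
Proof.
move=> d; case: (boolP (d %| N)) => dvd_dN; last by rewrite !codivisor_id.
apply: val_inj => /=; rewrite !val_codivisor ?dvdn_div //.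
by rewrite divnA // mulKn.
Qed.

Lemma codivisor_fixed (d : 'I_N.+1) : (d %| N) && (codivisor d == d) = (N == d * d).
Proof.
apply/idP/eqP => [/andP[dvd_dN /eqP/(congr1 val)]|N_sq].
  by rewrite /= val_codivisor // => fd; rewrite -[LHS](divnK dvd_dN) fd.
have dvd_dN : d %| N by rewrite [X in _ %| X]N_sq dvdn_mulr.
have d_gt0 : 0 < d by nia.
by rewrite dvd_dN; apply/eqP/val_inj; rewrite /= val_codivisor // [X in X %/ _]N_sq mulnK.
Qed.

Lemma odd_count_divisors : odd (count (dvdn^~ N) (iota 1 N)) <-> exists k, N = k ^ 2.
Proof.
have -> : count (dvdn^~ N) (iota 1 N) = \sum_(d < N.+1 | d %| N) 1.
  rewrite -(big_mkord (fun d => d %| N) (fun=> 1)) /index_iota subn0 /= big_cons.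
  by rewrite dvd0n eqn0Ngt N_gt0 sum1_count.
rewrite (odd_sum_involution codivisorK dvdn_codivisor) // (eq_bigl _ _ codivisor_fixed).
case: (boolP [exists d : 'I_N.+1, N == d * d]) => [/existsP[d /eqP N_sq]|no_root].
  rewrite (big_pred1 d) => [|d' /=]; first by split=> // _; exists d; rewrite -mulnn.
  by apply/eqP/eqP => [N_sq'|->]; [apply: val_inj => /=; nia|].
rewrite big_pred0 => [|d]; last by apply/negP => N_sq; case/existsP: no_root; exists d.
split=> // -[k N_sq].
have k_lt : k < N.+1 by rewrite ltnS N_sq; nia.
by case/existsP: no_root; exists (Ordinal k_lt); rewrite /= N_sq mulnn.
Qed.

End Codivisor.

Lemma odd_divisor_codivisor n d : d %| n -> odd n = odd d && odd (n %/ d).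
Proof. by move=> dvd_dn; rewrite -[in LHS](divnK dvd_dn) oddM andbC. Qed.

Lemma odd_codivisor_count_predT n :
  odd_codivisor_count predT n =
  odd_codivisor_count odd n + odd_codivisor_count (fun d => ~~ odd d) n.
Proof.
rewrite /odd_codivisor_count -count_predUI.
rewrite (@eq_count _ (predI _ _) pred0) => [|d /=]; last by case: (odd d); rewrite ?andbF.
rewrite count_pred0 addn0; apply: eq_count => d /=.
by case: (odd d); rewrite ?andbF ?orbF.
Qed.

Lemma odd_codivisor_count_odd_of_odd n :
  odd n -> odd_codivisor_count odd n = count (dvdn^~ n) (iota 1 n).
Proof.
move=> odd_n; apply: eq_count => d /=; case: (boolP (d %| n)) => //= dvd_dn.
by move: odd_n; rewrite (odd_divisor_codivisor dvd_dn) => /andP[-> ->].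
Qed.

Lemma odd_codivisor_count_even_of_odd n :
  odd n -> odd_codivisor_count (fun d => ~~ odd d) n = 0.
Proof.
move=> odd_n; apply/eqP; rewrite eqn0Ngt -has_count; apply/hasPn => d _ /=.
apply/negP => /and3P[dvd_dn even_d _].
by move: odd_n; rewrite (odd_divisor_codivisor dvd_dn) (negbTE even_d).
Qed.

Lemma odd_codivisor_count_odd_of_even n :
  ~~ odd n -> odd_codivisor_count odd n = 0.
Proof.
move=> even_n; apply/eqP; rewrite eqn0Ngt -has_count; apply/hasPn => d _ /=.
apply/negP => /and3P[dvd_dn odd_d odd_q].
by move: even_n; rewrite (odd_divisor_codivisor dvd_dn) odd_d odd_q.
Qed.

Lemma count_iota_double (a : pred nat) m : (forall d, odd d -> a d = false) ->
  count a (iota 1 (2 * m)) = count (fun d => a (2 * d)) (iota 1 m).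
Proof.
move=> a_odd; elim: m => // m IH.
rewrite (_ : 2 * m.+1 = 2 * m + 2); last lia.
rewrite iotaD count_cat IH -[m.+1]addn1 iotaD count_cat /= a_odd; last by rewrite oddD oddM.
by rewrite (_ : (1 + 2 * m).+1 = 2 * (1 + m)) //; lia.
Qed.

Lemma odd_codivisor_count_even_double m : 0 < m ->
  odd_codivisor_count (fun d => ~~ odd d) (2 * m) = odd_codivisor_count predT m.
Proof.
move=> m_gt0; rewrite /odd_codivisor_count count_iota_double => [|d ->]; last by rewrite andbF.
by apply: eq_count => d /=; rewrite dvdn_pmul2l // oddM /= divnMl.
Qed.

Lemma sq_of_odd n : odd n -> (exists k, n = k ^ 2) <-> exists k, odd k /\ n = k ^ 2.
Proof.
move=> odd_n; split=> [[k n_eq]|[k [_ n_eq]]]; last by exists k.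
by exists k; split => //; move: odd_n; rewrite n_eq oddX.
Qed.

Lemma sq_of_even n : ~~ odd n -> (exists k, n = k ^ 2) <-> exists k, ~~ odd k /\ n = k ^ 2.
Proof.
move=> even_n; split=> [[k n_eq]|[k [_ n_eq]]]; last by exists k.
by exists k; split => //; move: even_n; rewrite n_eq oddX.
Qed.

Lemma twice_sq_even n : (exists k, n = 2 * k ^ 2) -> ~~ odd n.
Proof. by case=> k ->; rewrite oddM. Qed.

Lemma double_sq m : (exists k, 2 * m = k ^ 2) <-> exists k, m = 2 * k ^ 2.
Proof.
split=> [[k m_eq]|[k ->]]; last by exists (2 * k); rewrite expnMn mulnA.
have : ~~ odd (k ^ 2) by rewrite -m_eq oddM.
rewrite oddX /= => /negbTE even_k.
exists k./2; have := odd_double_half k; rewrite even_k add0n -mul2n; nia.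
Qed.

Lemma double_twice_sq m : (exists k, 2 * m = 2 * k ^ 2) <-> exists k, m = k ^ 2.
Proof. by split=> -[k m_eq]; exists k; lia. Qed.

Lemma even_double_half n : ~~ odd n -> n = 2 * n./2.
Proof. by move=> /negbTE even_n; rewrite mul2n -[LHS]odd_double_half even_n. Qed.

Lemma odd_codivisor_count_predT_oddP n : 0 < n ->
  odd (odd_codivisor_count predT n) <->
  (exists k, n = k ^ 2) \/ (exists k, n = 2 * k ^ 2).
Proof.
elim/ltn_ind: n => n IH n_gt0; rewrite odd_codivisor_count_predT.
case: (boolP (odd n)) => [odd_n|/even_double_half n_eq].
  rewrite odd_codivisor_count_even_of_odd // addn0.
  rewrite odd_codivisor_count_odd_of_odd // odd_count_divisors //.
  by split=> [|[//|/twice_sq_even]]; [left | rewrite odd_n].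
have [half_gt0 half_lt] : 0 < n./2 /\ n./2 < n by lia.
rewrite n_eq odd_codivisor_count_odd_of_even ?oddM // add0n.
by rewrite odd_codivisor_count_even_double // IH // double_sq double_twice_sq or_comm.
Qed.

Lemma odd_codivisor_count_odd_oddP n : 0 < n ->
  odd (odd_codivisor_count odd n) <-> exists k, odd k /\ n = k ^ 2.
Proof.
move=> n_gt0; case: (boolP (odd n)) => [odd_n|even_n].
  by rewrite odd_codivisor_count_odd_of_odd // odd_count_divisors // sq_of_odd.
rewrite odd_codivisor_count_odd_of_even //; split=> // -[k [odd_k n_eq]].
by move: even_n; rewrite n_eq oddX odd_k.
Qed.

Lemma odd_codivisor_count_even_oddP n : 0 < n ->
  odd (odd_codivisor_count (fun d => ~~ odd d) n) <->
  (exists k, ~~ odd k /\ n = k ^ 2) \/ (exists k, n = 2 * k ^ 2).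
Proof.
move=> n_gt0; case: (boolP (odd n)) => [odd_n|/even_double_half n_eq].
  rewrite odd_codivisor_count_even_of_odd //; split=> // -[[k [even_k n_eq]]|/twice_sq_even].
    by move: odd_n; rewrite n_eq oddX (negbTE even_k).
  by rewrite odd_n.
have half_gt0 : 0 < n./2 by lia.
rewrite n_eq -sq_of_even ?oddM // odd_codivisor_count_even_double //.
by rewrite odd_codivisor_count_predT_oddP // double_sq double_twice_sq or_comm.
Qed.

Theorem theorem1p4 (n : nat) (hn : 0 < n) :
  (odd (sptbar n) <-> (exists k, n = k ^ 2) \/ (exists k, n = 2 * k ^ 2)) /\
  (odd (sptbar1 n) <-> exists k, odd k /\ n = k ^ 2) /\
  (odd (sptbar2 n) <->
     (exists k, ~~ odd k /\ n = k ^ 2) \/ (exists k, n = 2 * k ^ 2)).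
Proof.
rewrite /sptbar /sptbar1 /sptbar2 !odd_sptbar_P.
split; first exact: odd_codivisor_count_predT_oddP.
split; first exact: odd_codivisor_count_odd_oddP.
exact: odd_codivisor_count_even_oddP.
Qed.
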